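(* For $n\ge 1$ let $Y_n$ be the random variable with \[ \mathbb{P}(Y_n=m)=\frac{[t^nx^m]H(t,x)}{[t^n]H(t,1)}. \] Then $Y_n/(2n)$ converges in law, with convergence of all moments, to a random variable $Y$ with the $\mathrm{Beta}(1,2)$ distribution, i.e. with density $f_Y(y)=2(1-y)$ for $y\in[0,1]$ and $0$ otherwise; its moments are $\mathbb{E}(Y^r)=\frac{2}{(r+1)(r+2)}$.
   Context: A bicolored Dyck path is a finite sequence of steps from $\{U_1,U_2,D\}$ ($U_1,U_2$ raise the height by $1$, $D$ lowers it by $1$) starting and ending at height $0$ and never going below height $0$; its length is its number of steps. Let $h_{n,m}$ be the number of pairs $(P,m)$ where $P$ is a bicolored Dyck path of length $2n$ with exactly one $U_2$ step, this being the $p$-th step of $P$, and $1\le m\le p$. Set $H(t,x)=\sum_{n,m}h_{n,m}t^nx^m$. (Equivalently, $Y_n$ is the value in the unique bottom-row cell of a uniformly random tableau with walls and holes of type $(n,n-1,1)$.) *)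

From Stdlib Require Import Reals List Arith Bool.
From Coquelicot Require Import Coquelicot.
Import ListNotations.
Open Scope R_scope.
Open Scope bool_scope.

(* Steps of a bicolored Dyck path. *)
Inductive step : Type := U1 | U2 | D.

Fixpoint words (k : nat) : list (list step) :=
  match k with
  | O => [ [] ]
  | S k' => flat_map (fun w => [U1 :: w; U2 :: w; D :: w]) (words k')
  end.

Fixpoint dyck_from (h : nat) (w : list step) : bool :=
  match w with
  | [] => Nat.eqb h 0
  | U1 :: w' => dyck_from (S h) w'
  | U2 :: w' => dyck_from (S h) w'
  | D :: w' => match h with O => false | S h' => dyck_from h' w' end
  end.

Definition is_dyck (w : list step) : bool := dyck_from 0 w.

Definition is_U2 (s : step) : bool := match s with U2 => true | _ => false end.

Definition count_U2 (w : list step) : nat := length (filter is_U2 w).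

(* 1-based position of the first U2 step (0 if none). *)
Fixpoint pos_U2 (w : list step) : nat :=
  match w with
  | [] => O
  | U2 :: _ => 1%nat
  | _ :: w' => S (pos_U2 w')
  end.

Definition h (n m : nat) : nat :=
  length (filter (fun w => is_dyck w && Nat.eqb (count_U2 w) 1
                           && Nat.leb 1 m && Nat.leb m (pos_U2 w))
                 (words (2 * n))).

(* [t^n] H(t,1) = sum_m h_{n,m}; m ranges over 1..2n since p <= 2n. *)
Definition htot (n : nat) : R := sum_f_R0 (fun m => INR (h n m)) (2 * n).

Definition probY (n m : nat) : R := INR (h n m) / htot n.

Definition expect_scaled (n : nat) (g : R -> R) : R :=
  sum_f_R0 (fun m => g (INR m / INR (2 * n)) * probY n m) (2 * n).

Definition fY (y : R) : R :=
  if Rle_dec 0 y then (if Rle_dec y 1 then 2 * (1 - y) else 0) else 0.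

(* Recolouring one U1 step of a U2-free Dyck path as U2 gives
   h_{n,j+1} = ((2n - j) C_n - A_j) / 2, where C_n is the Catalan number and A_j the total
   height after j steps over all U2-free Dyck paths of length 2n.  Heights are of order
   sqrt n: the sum of height * (height + 2) after j steps is exactly
   3 j (2n - j) C_n / (2n - 1), so by AM-GM A_j <= 2 sqrt (3n) C_n.  Hence
   P(Y_n = j + 1) = 2 (2n - j) / (2n)^2 + o(1/n) uniformly in j, and E g(Y_n / 2n) is a
   Riemann sum of g(y) 2 (1 - y) up to o(1).  The moments are the case g(y) = y^r, for
   which continuity and boundedness on [0, 1] suffice. *)

From Stdlib Require Import Reals Lra Lia List Bool.
From Coquelicot Require Import Coquelicot.
Import ListNotations.
Open Scope R_scope.

(** * Weighted counts of Dyck paths *)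

Fixpoint lsum (l : list R) : R := match l with [] => 0 | x :: l' => x + lsum l' end.

Lemma lsum_app l1 l2 : lsum (l1 ++ l2) = lsum l1 + lsum l2.
Proof. induction l1 as [|x l1 IH]; simpl; [ring | rewrite IH; ring]. Qed.

Lemma lsum_map_plus {A} (f g : A -> R) l :
  lsum (map (fun x => f x + g x) l) = lsum (map f l) + lsum (map g l).
Proof. induction l as [|x l IH]; simpl; [ring | rewrite IH; ring]. Qed.

Lemma lsum_map_zero {A} (l : list A) : lsum (map (fun _ => 0) l) = 0.
Proof. induction l as [|x l IH]; simpl; [ring | rewrite IH; ring]. Qed.

Lemma lsum_map_flat_map {A B} (f : B -> R) (g : A -> list B) l :
  lsum (map f (flat_map g l)) = lsum (map (fun x => lsum (map f (g x))) l).
Proof. induction l as [|x l IH]; simpl; [ring | now rewrite map_app, lsum_app, IH]. Qed.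

Lemma INR_length_filter {A} (p : A -> bool) l :
  INR (length (filter p l)) = lsum (map (fun x => if p x then 1 else 0) l).
Proof.
  induction l as [|x l IH]; [reflexivity|]; cbn [filter map lsum].
  destruct (p x); cbn [length]; rewrite ?S_INR, IH; ring.
Qed.

Fixpoint path_sum (k a : nat) (f : list step -> R) : R :=
  match k with
  | O => if Nat.eqb a 0 then f [] else 0
  | S k' =>
      path_sum k' (S a) (fun w => f (U1 :: w)) + path_sum k' (S a) (fun w => f (U2 :: w))
      + match a with O => 0 | S a' => path_sum k' a' (fun w => f (D :: w)) end
  end.

Lemma path_sum_words k : forall a f,
  lsum (map (fun w => if dyck_from a w then f w else 0) (words k)) = path_sum k a f.
Proof.
  induction k as [|k IH]; intros a f; simpl.
  - destruct a; simpl; ring.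
  - rewrite lsum_map_flat_map; simpl.
    rewrite (map_ext _ (fun w => (if dyck_from (S a) w then f (U1 :: w) else 0)
                       + (if dyck_from (S a) w then f (U2 :: w) else 0)
                       + match a with O => 0
                         | S a' => if dyck_from a' w then f (D :: w) else 0 end))
      by (intros w; destruct a; ring).
    rewrite !lsum_map_plus, !IH.
    destruct a; [now rewrite lsum_map_zero | now rewrite IH].
Qed.

Lemma path_sum_ext k : forall a f g, (forall w, f w = g w) -> path_sum k a f = path_sum k a g.
Proof.
  induction k as [|k IH]; intros a f g E; simpl; [now rewrite E|].
  rewrite (IH _ _ (fun w => g (U1 :: w)) (fun w => E _)),
    (IH _ _ (fun w => g (U2 :: w)) (fun w => E _)).
  destruct a; [|rewrite (IH _ _ (fun w => g (D :: w)) (fun w => E _))]; reflexivity.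
Qed.

Lemma path_sum_lin k : forall a c d f g,
  path_sum k a (fun w => c * f w + d * g w) = c * path_sum k a f + d * path_sum k a g.
Proof.
  induction k as [|k IH]; intros; simpl; [destruct (Nat.eqb a 0); ring|].
  rewrite !IH. destruct a; [|rewrite IH]; ring.
Qed.

Lemma path_sum_le k : forall a f g, (forall w, f w <= g w) -> path_sum k a f <= path_sum k a g.
Proof.
  induction k as [|k IH]; intros a f g H; simpl; [destruct (Nat.eqb a 0); auto; lra|].
  apply Rplus_le_compat; [apply Rplus_le_compat; apply IH; auto|].
  destruct a; [lra | apply IH; auto].
Qed.

Lemma path_sum_zero k : forall a, path_sum k a (fun _ => 0) = 0.
Proof.
  induction k as [|k IH]; intros a; simpl; [destruct (Nat.eqb a 0); ring|].
  rewrite !IH. destruct a; [|rewrite IH]; ring.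
Qed.

Lemma path_sum_nonneg k a f : (forall w, 0 <= f w) -> 0 <= path_sum k a f.
Proof. intros H. rewrite <- (path_sum_zero k a). now apply path_sum_le. Qed.

Definition free_sum (k a : nat) (f : list step -> R) : R :=
  path_sum k a (fun w => if Nat.eqb (count_U2 w) 0 then f w else 0).

Lemma free_sum_S k a f :
  free_sum (S k) a f = free_sum k (S a) (fun w => f (U1 :: w))
    + match a with O => 0 | S a' => free_sum k a' (fun w => f (D :: w)) end.
Proof.
  unfold free_sum; cbn [path_sum].
  rewrite (path_sum_ext k (S a) (fun w => if Nat.eqb (count_U2 (U2 :: w)) 0 then f (U2 :: w) else 0)
    (fun _ => 0)), path_sum_zero by reflexivity.
  rewrite Rplus_0_r. destruct a; reflexivity.
Qed.

Lemma free_sum_ext k a f g : (forall w, f w = g w) -> free_sum k a f = free_sum k a g.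
Proof. intros E. apply path_sum_ext. intros w. now rewrite E. Qed.

Lemma free_sum_lin k a c d f g :
  free_sum k a (fun w => c * f w + d * g w) = c * free_sum k a f + d * free_sum k a g.
Proof.
  unfold free_sum. rewrite <- path_sum_lin. apply path_sum_ext.
  intros w. destruct (Nat.eqb _ _); ring.
Qed.

Lemma free_sum_le k a f g : (forall w, f w <= g w) -> free_sum k a f <= free_sum k a g.
Proof. intros H. apply path_sum_le. intros w. destruct (Nat.eqb _ _); auto; lra. Qed.

Lemma free_sum_nonneg k a f : (forall w, 0 <= f w) -> 0 <= free_sum k a f.
Proof. intros H. apply path_sum_nonneg. intros w. destruct (Nat.eqb _ _); auto; lra. Qed.

Lemma free_sum_scal k a c f : free_sum k a (fun w => c * f w) = c * free_sum k a f.
Proof.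
  rewrite <- (Rplus_0_r (c * _)), <- (Rmult_0_l (free_sum k a f)), <- free_sum_lin.
  apply free_sum_ext. intros w. ring.
Qed.

Definition ballot (k a : nat) : R := free_sum k a (fun _ => 1).

Lemma ballot_0 a : ballot 0 a = if Nat.eqb a 0 then 1 else 0.
Proof. reflexivity. Qed.

Lemma ballot_S k a :
  ballot (S k) a = ballot k (S a) + match a with O => 0 | S a' => ballot k a' end.
Proof. unfold ballot. rewrite free_sum_S. destruct a; reflexivity. Qed.

Lemma ballot_nonneg k a : 0 <= ballot k a.
Proof. apply free_sum_nonneg. intros; lra. Qed.

Lemma ballot_diag a : 1 <= ballot a a.
Proof.
  induction a as [|a IH]; [rewrite ballot_0; simpl; lra|].
  rewrite ballot_S. pose proof (ballot_nonneg a (S (S a))). lra.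
Qed.

Lemma ballot_ge1 i : forall a, 1 <= ballot (a + 2 * i) a.
Proof.
  induction i as [|i IH]; intros a.
  - rewrite Nat.mul_0_r, Nat.add_0_r. apply ballot_diag.
  - replace (a + 2 * S i)%nat with (S (S a + 2 * i)) by lia.
    rewrite ballot_S. specialize (IH (S a)).
    destruct a; [lra|]. pose proof (ballot_nonneg (S (S a) + 2 * i) a). lra.
Qed.

(* Both sides are multiples of the same binomial coefficient, by the ballot formula
   [ballot k a = (a + 1) / (k + 1) * C(k + 1, (k - a) / 2)]. *)
Lemma ballot_ratio k : forall b,
  (INR b + 1) * (INR k + INR b + 4) * ballot k (S (S b))
  = (INR b + 3) * (INR k - INR b) * ballot k b.
Proof.
  induction k as [|k IH]; intros b.
  - rewrite !ballot_0. destruct b; simpl; ring.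
  - rewrite !ballot_S. cbn iota.
    assert (H1 := IH (S b)).
    destruct b as [|c].
    + rewrite !S_INR in *. simpl INR in *. lra.
    + assert (H2 := IH c).
      apply (Rmult_eq_reg_l (INR c + 3)); [|pose proof (pos_INR c); lra].
      rewrite !S_INR in *.
      assert (E1 := f_equal (Rmult (INR c + 2)) H1).
      assert (E2 := f_equal (Rmult (INR c + 4)) H2).
      lra.
Qed.

Definition one_U2_paths (k a m : nat) : R :=
  path_sum k a (fun w => if Nat.eqb (count_U2 w) 1 && Nat.leb m (pos_U2 w) then 1 else 0).

Lemma one_U2_paths_S k a m :
  one_U2_paths (S k) a (S m) = one_U2_paths k (S a) m + (if Nat.eqb m 0 then ballot k (S a) else 0)
    + match a with O => 0 | S a' => one_U2_paths k a' m end.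
Proof.
  unfold one_U2_paths at 1; cbn [path_sum].
  rewrite (path_sum_ext k (S a) (fun w => if Nat.eqb (count_U2 (U2 :: w)) 1
                                            && Nat.leb (S m) (pos_U2 (U2 :: w)) then 1 else 0)
             (fun w => if Nat.eqb m 0 then (if Nat.eqb (count_U2 w) 0 then 1 else 0) else 0)).
  2:{ intros w. destruct m; simpl; [now rewrite andb_true_r | now rewrite andb_false_r]. }
  destruct m; [|rewrite path_sum_zero]; destruct a; reflexivity.
Qed.

Lemma pos_U2_ge1 w : count_U2 w <> O -> (1 <= pos_U2 w)%nat.
Proof. induction w as [|[] w IH]; simpl; [tauto | lia ..]. Qed.

Lemma one_U2_paths_0 k a : one_U2_paths k a 0 = one_U2_paths k a 1.
Proof.
  apply path_sum_ext. intros w.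
  destruct (Nat.eqb (count_U2 w) 1) eqn:E; [|reflexivity].
  apply Nat.eqb_eq in E.
  assert (Hp : Nat.leb 1 (pos_U2 w) = true) by (apply Nat.leb_le, pos_U2_ge1; lia).
  now rewrite Hp.
Qed.

Fixpoint height (a : nat) (w : list step) (j : nat) : nat :=
  match j, w with
  | O, _ | _, [] => a
  | S j', D :: w' => height (pred a) w' j'
  | S j', _ :: w' => height (S a) w' j'
  end.

Definition height_sum (k a j : nat) : R := free_sum k a (fun w => INR (height a w j)).

Definition height2_sum (k a j : nat) : R :=
  free_sum k a (fun w => INR (height a w j) * (INR (height a w j) + 2)).

Lemma height_sum_0 k a : height_sum k a 0 = INR a * ballot k a.
Proof.
  unfold height_sum, ballot. rewrite <- free_sum_scal.
  apply free_sum_ext. intros [|s w]; cbn [height]; ring.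
Qed.

Lemma height2_sum_0 k a : height2_sum k a 0 = INR a * (INR a + 2) * ballot k a.
Proof.
  unfold height2_sum, ballot. rewrite <- free_sum_scal.
  apply free_sum_ext. intros [|s w]; cbn [height]; ring.
Qed.

Lemma height_sum_S k a j : height_sum (S k) a (S j)
  = height_sum k (S a) j + match a with O => 0 | S a' => height_sum k a' j end.
Proof. unfold height_sum. rewrite free_sum_S. destruct a; reflexivity. Qed.

Lemma height2_sum_S k a j : height2_sum (S k) a (S j)
  = height2_sum k (S a) j + match a with O => 0 | S a' => height2_sum k a' j end.
Proof. unfold height2_sum. rewrite free_sum_S. destruct a; reflexivity. Qed.

Lemma height2_sum_end k : forall a, height2_sum k a k = 0.
Proof.
  induction k as [|k IH]; intros a.
  - rewrite height2_sum_0, ballot_0. destruct a; simpl; ring.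
  - rewrite height2_sum_S, IH. destruct a; [|rewrite IH]; ring.
Qed.

(* Recolouring one [U1] step as [U2] is a bijection from U2-free paths with a chosen
   [U1] step onto paths with exactly one [U2]; and after step [m] a U2-free path of
   length [k] makes [(k - m - height m) / 2] up steps. *)
Lemma one_U2_paths_height_sum k : forall a m, (m <= k)%nat ->
  2 * one_U2_paths k a (S m) + height_sum k a m = (INR k - INR m) * ballot k a.
Proof.
  induction k as [|k IH]; intros a m Hm.
  - replace m with 0%nat by lia. rewrite height_sum_0, ballot_0.
    unfold one_U2_paths. destruct a; simpl; ring.
  - rewrite one_U2_paths_S, ballot_S.
    destruct m as [|m].
    + rewrite height_sum_0, ballot_S. cbn [Nat.eqb].
      assert (H1 := IH (S a) 0%nat (Nat.le_0_l _)).
      rewrite height_sum_0, <- one_U2_paths_0 in H1.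
      destruct a as [|a].
      * rewrite S_INR in *. simpl INR in *. lra.
      * assert (H2 := IH a 0%nat (Nat.le_0_l _)).
        rewrite height_sum_0, <- one_U2_paths_0 in H2. rewrite !S_INR in *. simpl INR in *. lra.
    + rewrite height_sum_S. cbn [Nat.eqb].
      assert (H1 := IH (S a) m ltac:(lia)).
      destruct a as [|a].
      * rewrite !S_INR in *. lra.
      * assert (H2 := IH a m ltac:(lia)). rewrite !S_INR in *. lra.
Qed.

Lemma ballot_1 b : ballot 1 b = if Nat.eqb b 1 then 1 else 0.
Proof. rewrite ballot_S, ballot_0. destruct b as [|[|b]]; rewrite ?ballot_0; simpl; ring. Qed.

Lemma height2_sum_eq k : forall a j, (j <= k)%nat ->
  INR k * (INR k - 1) * height2_sum k a j
  = (INR a * (INR a + 2) * (INR k - INR j) * (INR k - INR j - 1)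
     + 3 * INR j * INR k * (INR k - INR j)) * ballot k a.
Proof.
  induction k as [|k IH]; intros a j Hj.
  { replace j with 0%nat by lia. simpl INR. ring. }
  destruct j as [|j].
  { rewrite height2_sum_0. simpl INR. ring. }
  rewrite height2_sum_S, ballot_S.
  destruct k as [|[|k]].
  - replace j with 0%nat by lia. simpl INR. ring.
  - destruct j as [|[|j]]; [|rewrite height2_sum_end | lia].
    + destruct a as [|[|[|a]]]; rewrite ?height2_sum_0, ?ballot_1; simpl; ring.
    + destruct a; [|rewrite height2_sum_end]; simpl INR; ring.
  - set (k' := S (S k)) in *.
    assert (Hk : INR k' - 1 <> 0) by (unfold k'; rewrite !S_INR; pose proof (pos_INR k); lra).
    apply (Rmult_eq_reg_l (INR k' - 1)); [|exact Hk].
    assert (Hjk : (j <= k')%nat) by (unfold k'; lia).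
    clearbody k'. clear Hj.
    assert (H1 := IH (S a) j Hjk).
    destruct a as [|a].
    + rewrite !S_INR in *. simpl INR in *.
      assert (E1 := f_equal (Rmult (INR k' + 1)) H1).
      lra.
    + assert (H2 := IH a j Hjk).
      assert (R := ballot_ratio k' a).
      rewrite !S_INR in *.
      set (X := ballot k' (S (S a))) in *. set (Z := ballot k' a) in *.
      set (Y1 := height2_sum k' (S (S a)) j) in *. set (Y2 := height2_sum k' a j) in *.
      set (x := INR a) in *. set (y := INR k') in *. set (z := INR j) in *.
      assert (E1 := f_equal (Rmult (y + 1)) H1).
      assert (E2 := f_equal (Rmult (y + 1)) H2).
      assert (E3 := f_equal (Rmult (2 * (y - z) * (y - z - 1))) R).
      lra.
Qed.

Lemma h_0 n : h n 0 = 0%nat.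
Proof.
  unfold h. induction (words (2 * n)) as [|w l IH]; simpl; [reflexivity|].
  now rewrite !andb_false_r.
Qed.

Lemma h_one_U2_paths n m : (1 <= m)%nat -> INR (h n m) = one_U2_paths (2 * n) 0 m.
Proof.
  intros Hm. unfold h, one_U2_paths. rewrite INR_length_filter, <- path_sum_words.
  f_equal. apply map_ext. intros w. unfold is_dyck.
  replace (Nat.leb 1 m) with true by (symmetry; now apply Nat.leb_le).
  destruct (dyck_from 0 w); simpl; [now rewrite andb_true_r | reflexivity].
Qed.

Definition catalan (n : nat) : R := ballot (2 * n) 0.

Lemma catalan_ge1 n : 1 <= catalan n.
Proof. exact (ballot_ge1 n 0). Qed.

Lemma h_succ n j : (j < 2 * n)%nat ->
  INR (h n (S j)) = ((INR (2 * n) - INR j) * catalan n - height_sum (2 * n) 0 j) / 2.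
Proof.
  intros Hj. rewrite h_one_U2_paths by lia.
  pose proof (one_U2_paths_height_sum (2 * n) 0 j ltac:(lia)). unfold catalan. lra.
Qed.

Lemma height_sum_nonneg k a j : 0 <= height_sum k a j.
Proof. apply free_sum_nonneg. intros; apply pos_INR. Qed.

Lemma height_sum_le k a j t : 0 < t ->
  height_sum k a j <= t * ballot k a + / t * height2_sum k a j.
Proof.
  intros Ht. unfold height_sum, height2_sum, ballot.
  rewrite <- free_sum_lin. apply free_sum_le. intros w.
  set (x := INR (height a w j)). assert (0 <= x) by apply pos_INR.
  apply (Rmult_le_reg_l t); [exact Ht|].
  replace (t * (t * 1 + / t * (x * (x + 2)))) with (t * t + x * (x + 2)) by (field; lra).
  nra.
Qed.

Lemma height2_sum_catalan_le n j : (1 <= n)%nat -> (j <= 2 * n)%nat ->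
  height2_sum (2 * n) 0 j <= 3 * INR n * catalan n.
Proof.
  intros Hn Hj. pose proof (height2_sum_eq (2 * n) 0 j Hj) as E.
  pose proof (catalan_ge1 n) as HC. unfold catalan in *.
  rewrite mult_INR in E. simpl INR in E.
  assert (Hn1 : 1 <= INR n) by (apply (le_INR 1); lia).
  assert (Hjn : INR j <= 2 * INR n) by (rewrite <- (mult_INR 2); apply le_INR; lia).
  set (Y := height2_sum (2 * n) 0 j) in *. set (C := ballot (2 * n) 0) in *.
  set (x := INR n) in *. set (z := INR j) in *.
  assert (E' : (2 * x - 1) * Y = 3 * z * (2 * x - z) * C).
  { apply (Rmult_eq_reg_l (2 * x)); lra. }
  assert (Hz : z * (2 * x - z) <= x * (2 * x - 1)).
  { pose proof (Rle_0_sqr (x - z)). assert (0 <= x * (x - 1)) by nra. unfold Rsqr in *. nra. }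
  apply (Rmult_le_reg_l (2 * x - 1)); [lra|]. nra.
Qed.

Lemma height_sum_catalan_le n j : (1 <= n)%nat -> (j <= 2 * n)%nat ->
  height_sum (2 * n) 0 j <= INR (2 * n) * sqrt (3 / INR n) * catalan n.
Proof.
  intros Hn Hj.
  assert (Hx : 0 < INR n) by (apply lt_0_INR; lia).
  set (s := sqrt (3 / INR n)).
  assert (Hs : 0 < s) by (apply sqrt_lt_R0, Rdiv_lt_0_compat; lra).
  assert (Hs2 : s * s = 3 / INR n) by (apply sqrt_sqrt, Rlt_le, Rdiv_lt_0_compat; lra).
  assert (Ht : 0 < INR n * s) by nra.
  eapply Rle_trans; [apply (height_sum_le _ _ _ (INR n * s) Ht)|].
  eapply Rle_trans.
  { apply Rplus_le_compat_l, Rmult_le_compat_l; [left; now apply Rinv_0_lt_compat|].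
    now apply height2_sum_catalan_le. }
  (* [s * s = 3 / n] makes the two terms of the AM-GM bound equal. *)
  replace (/ (INR n * s) * (3 * INR n * catalan n)) with (INR n * s * catalan n).
  - unfold catalan. rewrite mult_INR. simpl INR. lra.
  - replace 3 with (INR n * (s * s)) by (rewrite Hs2; field; lra).
    field. lra.
Qed.

(** * Asymptotics *)

Definition riemann_sum (K : nat) (f : R -> R) : R :=
  sum_f_R0 (fun j => f (INR (S j) / (INR K + 1)) / (INR K + 1)) K.

Lemma Riemann_sum_mkseq (f : R -> R) K : forall x : nat -> R,
  Riemann_sum f (SF_seq_f2 (fun _ y => y) (seq.mkseq x (S (S K))))
  = sum_f_R0 (fun j => (x (S j) - x j) * f (x (S j))) K.
Proof.
  assert (mkseq_S : forall (x : nat -> R) n,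
    seq.mkseq x (S n) = x 0%nat :: seq.mkseq (fun i => x (S i)) n).
  { intros x n. unfold seq.mkseq. simpl. f_equal. generalize 0%nat.
    induction n as [|n IH]; intros m; simpl; f_equal; auto. }
  induction K as [|K IH]; intros x; rewrite mkseq_S, SF_cons_f2, Riemann_sum_cons
    by (rewrite seq.size_mkseq; lia).
  - change (Riemann_sum f (SF_seq_f2 (fun _ y => y) (seq.mkseq (fun i => x (S i)) 1)))
      with 0.
    simpl. unfold plus, scal; simpl. unfold mult; simpl. ring.
  - rewrite IH, (decomp_sum _ (S K)) by lia.
    rewrite mkseq_S. simpl. unfold plus, scal; simpl. unfold mult; simpl. ring.
Qed.

Lemma Riemann_sum_unif_part (f : R -> R) K :
  Riemann_sum f (SF_seq_f2 (fun _ y => y) (unif_part 0 1 K)) = riemann_sum K f.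
Proof.
  unfold unif_part, riemann_sum. rewrite Riemann_sum_mkseq. apply sum_eq; intros i _.
  assert (HK : INR K + 1 <> 0) by (pose proof (pos_INR K); lra).
  rewrite !Rminus_0_r, !Rplus_0_l, !Rmult_1_r, S_INR. field. exact HK.
Qed.

Lemma riemann_sum_lim (f : R -> R) :
  ex_RInt f 0 1 -> is_lim_seq (fun K => riemann_sum K f) (RInt f 0 1).
Proof.
  intros Hex. apply is_lim_seq_spec. intros eps.
  destruct (proj1 (filterlim_locally _ _) (RInt_correct f 0 1 Hex) eps) as [delta Hd].
  assert (Hdelta : 0 <= / delta) by (apply Rlt_le, Rinv_0_lt_compat, cond_pos).
  destruct (nfloor_ex (/ delta) Hdelta) as [N HN].
  exists N. intros K HK.
  set (ptd := SF_seq_f2 (fun _ y => y) (unif_part 0 1 K)).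
  destruct (Riemann_fine_unif_part (fun _ y => y) 0 1 K) as [Hs [Hp [Hh Hl]]];
    [intros; lra | lra |].
  assert (Hstep : seq_step (SF_lx ptd) < delta).
  { eapply Rle_lt_trans; [exact Hs|].
    assert (INR N <= INR K) by (apply le_INR; lia).
    assert (0 < / delta) by (apply Rinv_0_lt_compat, cond_pos).
    rewrite Rminus_0_r, Rdiv_1_l, <- (Rinv_inv delta).
    apply Rinv_lt_contravar; [apply Rmult_lt_0_compat|]; lra. }
  specialize (Hd ptd Hstep). unfold ptd in Hd.
  rewrite Rmin_left, Rmax_right, Riemann_sum_unif_part in Hd by lra.
  rewrite Rminus_0_r, sign_eq_1 in Hd by lra.
  change (scal 1 ?x) with (1 * x) in Hd. rewrite Rmult_1_l in Hd.
  exact (Hd (conj Hp (conj Hh Hl))).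
Qed.

Definition mass (n : nat) (g : R -> R) : R :=
  sum_f_R0 (fun m => g (INR m / INR (2 * n)) * INR (h n m)) (2 * n).

Lemma expect_scaled_mass n g : expect_scaled n g = mass n g / mass n (fun _ => 1).
Proof.
  unfold expect_scaled, probY, htot, mass, Rdiv.
  rewrite (sum_eq (fun m => 1 * INR (h n m)) (fun m => INR (h n m)) (2 * n)) by (intros; ring).
  rewrite (Rmult_comm (sum_f_R0 _ _)), scal_sum. apply sum_eq. intros; ring.
Qed.

Definition scaled_mass (n : nat) (g : R -> R) : R :=
  4 * mass n g / (catalan n * INR (2 * n) ^ 2).

Lemma scaled_mass_sub_riemann_sum n g : (1 <= n)%nat ->
  scaled_mass n g - riemann_sum (pred (2 * n)) (fun y => g y * (2 * (1 - y)))
  = sum_f_R0 (fun j => g (INR (S j) / INR (2 * n))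
                       * (2 - 2 * height_sum (2 * n) 0 j / catalan n) / INR (2 * n) ^ 2)
      (pred (2 * n)).
Proof.
  intros Hn.
  assert (HN : 0 < INR (2 * n)) by (apply lt_0_INR; lia).
  assert (HK : INR (pred (2 * n)) + 1 = INR (2 * n)) by (rewrite <- S_INR; f_equal; lia).
  pose proof (catalan_ge1 n) as HC.
  unfold scaled_mass, mass, riemann_sum. rewrite HK.
  rewrite (decomp_sum _ (2 * n)), h_0, Rmult_0_r, Rplus_0_l by lia.
  unfold Rdiv at 1. rewrite scal_sum, (Rmult_comm (sum_f_R0 _ _)), scal_sum, <- minus_sum.
  apply sum_eq. intros j Hj. rewrite h_succ, S_INR by lia.
  field. lra.
Qed.

Lemma scaled_mass_riemann_sum_dist n g M : (1 <= n)%nat ->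
  (forall x, 0 <= x <= 1 -> Rabs (g x) <= M) ->
  Rabs (scaled_mass n g - riemann_sum (pred (2 * n)) (fun y => g y * (2 * (1 - y))))
  <= M * (/ INR n + 2 * sqrt (3 / INR n)).
Proof.
  intros Hn HM. rewrite scaled_mass_sub_riemann_sum by exact Hn.
  assert (HN : 0 < INR (2 * n)) by (apply lt_0_INR; lia).
  assert (HK : INR (S (pred (2 * n))) = INR (2 * n)) by (f_equal; lia).
  pose proof (catalan_ge1 n) as HC.
  set (N := INR (2 * n)) in *. set (s := sqrt (3 / INR n)).
  assert (HM0 : 0 <= M) by (pose proof (HM 0 ltac:(lra)); pose proof (Rabs_pos (g 0)); lra).
  eapply Rle_trans; [apply sum_f_R0_triangle|].
  eapply Rle_trans; [apply (sum_Rle _ (fun _ => M * (2 + 2 * (N * s)) / N ^ 2))|].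
  - intros j Hj.
    assert (Hx : 0 <= INR (S j) / N <= 1).
    { assert (INR (S j) <= N) by (apply le_INR; lia). pose proof (pos_INR (S j)).
      split; [apply Rdiv_le_0_compat | apply (Rdiv_le_1 _ _ HN)]; lra. }
    assert (Hq : 0 <= height_sum (2 * n) 0 j / catalan n <= N * s).
    { pose proof (height_sum_catalan_le n j Hn ltac:(lia)) as HA. fold N s in HA.
      pose proof (height_sum_nonneg (2 * n) 0 j).
      split; [apply Rdiv_le_0_compat; lra|].
      apply (Rmult_le_reg_r (catalan n)); [lra|]. unfold Rdiv. rewrite Rmult_assoc, Rinv_l; lra. }
    unfold Rdiv at 1 4. rewrite !Rabs_mult, Rabs_inv, (Rabs_pos_eq (N ^ 2)) by (apply pow_le; lra).
    apply Rmult_le_compat_r; [apply Rlt_le, Rinv_0_lt_compat, pow_lt; lra|].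
    apply Rmult_le_compat; try apply Rabs_pos; [now apply HM|].
    apply Rabs_le. lra.
  - rewrite sum_cte, HK. unfold N. rewrite mult_INR. simpl INR.
    assert (0 < INR n) by (apply lt_0_INR; lia).
    right. field. lra.
Qed.

Lemma scaled_mass_dist_lim M : is_lim_seq (fun n => M * (/ INR n + 2 * sqrt (3 / INR n))) 0.
Proof.
  assert (Hinv : is_lim_seq (fun n => / INR n) 0).
  { apply (is_lim_seq_inv _ p_infty); [exact is_lim_seq_INR | discriminate]. }
  assert (Hsqrt : is_lim_seq (fun n => sqrt (3 / INR n)) 0).
  { rewrite <- sqrt_0. apply is_lim_seq_continuous; [apply continuity_pt_sqrt; lra|].
    replace 0 with (3 * 0) by ring. now apply (is_lim_seq_scal_l _ 3 0). }
  replace 0 with (M * (0 + 2 * 0)) by ring.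
  apply (is_lim_seq_scal_l _ M (Finite (0 + 2 * 0))), is_lim_seq_plus'; [exact Hinv|].
  now apply (is_lim_seq_scal_l _ 2 0).
Qed.

Lemma scaled_mass_lim (g : R -> R) (M : R) :
  (forall x, 0 <= x <= 1 -> continuous g x) -> (forall x, 0 <= x <= 1 -> Rabs (g x) <= M) ->
  is_lim_seq (fun n => scaled_mass n g) (RInt (fun y => g y * (2 * (1 - y))) 0 1).
Proof.
  intros Hc HM. set (f := fun y => g y * (2 * (1 - y))).
  assert (Hf : ex_RInt f 0 1).
  { apply (@ex_RInt_continuous R_CompleteNormedModule).
    intros z Hz. rewrite Rmin_left, Rmax_right in Hz by lra.
    apply (@continuous_mult R_UniformSpace R_AbsRing); [now apply Hc|].
    apply (@ex_derive_continuous R_AbsRing R_NormedModule). auto_derive. exact I. }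
  assert (HR : is_lim_seq (fun n => riemann_sum (pred (2 * n)) f) (RInt f 0 1)).
  { apply (is_lim_seq_subseq (fun K => riemann_sum K f)); [|now apply riemann_sum_lim].
    apply eventually_subseq. intros n. lia. }
  pose proof (scaled_mass_dist_lim M) as He.
  apply (is_lim_seq_le_le_loc
           (fun n => riemann_sum (pred (2 * n)) f - M * (/ INR n + 2 * sqrt (3 / INR n)))
           _ (fun n => riemann_sum (pred (2 * n)) f + M * (/ INR n + 2 * sqrt (3 / INR n)))).
  - exists 1%nat. intros n Hn.
    pose proof (proj1 (Rabs_le_between _ _) (scaled_mass_riemann_sum_dist n g M Hn HM)).
    unfold f. lra.
  - rewrite <- (Rminus_0_r (RInt f 0 1)). now apply is_lim_seq_minus'.
  - rewrite <- (Rplus_0_r (RInt f 0 1)). now apply is_lim_seq_plus'.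
Qed.

Lemma RInt_pow_beta r :
  RInt (fun y => y ^ r * (2 * (1 - y))) 0 1 = 2 / ((INR r + 1) * (INR r + 2)).
Proof.
  assert (Hr1 : INR r + 1 <> 0) by (pose proof (pos_INR r); lra).
  assert (Hr2 : INR r + 2 <> 0) by (pose proof (pos_INR r); lra).
  set (F := fun y => 2 * (y ^ S r / (INR r + 1) - y ^ S (S r) / (INR r + 2))).
  replace (2 / ((INR r + 1) * (INR r + 2))) with (F 1 - F 0)
    by (unfold F; rewrite !pow1, !pow_i by lia; field; auto).
  apply is_RInt_unique, (@is_RInt_derive R_CompleteNormedModule F).
  - intros x _. unfold F. auto_derive; [exact I|].
    change (match r with O => 1 | S _ => INR r + 1 end) with (INR (S r)).
    rewrite S_INR. field. auto.
  - intros x _. apply (@ex_derive_continuous R_AbsRing R_NormedModule). auto_derive. exact I.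
Qed.

Lemma RInt_mult_fY (g : R -> R) :
  RInt (fun y => g y * fY y) 0 1 = RInt (fun y => g y * (2 * (1 - y))) 0 1.
Proof.
  apply RInt_ext. intros x Hx. rewrite Rmin_left, Rmax_right in Hx by lra.
  unfold fY. destruct (Rle_dec 0 x), (Rle_dec x 1); lra || reflexivity.
Qed.

Lemma mass_one_pos n : (1 <= n)%nat -> 0 < mass n (fun _ => 1).
Proof.
  intros Hn. unfold mass.
  rewrite (decomp_sum _ (2 * n)), (decomp_sum _ (pred (2 * n))) by lia.
  rewrite h_0, (h_succ n 0), height_sum_0 by lia.
  assert (0 < INR (2 * n)) by (apply lt_0_INR; lia). pose proof (catalan_ge1 n).
  assert (0 <= sum_f_R0 (fun i => 1 * INR (h n (S (S i)))) (pred (pred (2 * n)))).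
  { apply cond_pos_sum. intros i. rewrite Rmult_1_l. apply pos_INR. }
  rewrite !INR_0. nra.
Qed.

Lemma expect_scaled_lim (g : R -> R) (M : R) :
  (forall x, 0 <= x <= 1 -> continuous g x) -> (forall x, 0 <= x <= 1 -> Rabs (g x) <= M) ->
  is_lim_seq (fun n => expect_scaled n g) (RInt (fun y => g y * fY y) 0 1).
Proof.
  intros Hc HM.
  assert (H1 : is_lim_seq (fun n => scaled_mass n (fun _ => 1)) 1).
  { assert (I1 : RInt (fun y => 1 * (2 * (1 - y))) 0 1 = 1).
    { rewrite <- (RInt_ext (fun y => y ^ 0 * (2 * (1 - y)))) by reflexivity.
      rewrite RInt_pow_beta. simpl. field. }
    pose proof (scaled_mass_lim (fun _ => 1) 1) as H.
    cbv beta in H. rewrite I1 in H. apply H.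
    - intros x _. apply continuous_const.
    - intros x _. rewrite Rabs_R1. lra. }
  pose proof (is_lim_seq_div' _ _ _ _ (scaled_mass_lim g M Hc HM) H1 R1_neq_R0) as Hdiv.
  rewrite Rdiv_1_r, <- RInt_mult_fY in Hdiv.
  refine (is_lim_seq_ext_loc _ _ _ _ Hdiv). exists 1%nat. intros n Hn.
  assert (0 < INR (2 * n)) by (apply lt_0_INR; lia). pose proof (catalan_ge1 n).
  pose proof (mass_one_pos n Hn).
  rewrite expect_scaled_mass. unfold scaled_mass. field. repeat split; lra.
Qed.

Theorem theorem18 :
  (* convergence in law: E g(Y_n/(2n)) -> E g(Y) for all bounded continuous g *)
  (forall g : R -> R,
      (forall x, continuous g x) -> (exists M, forall x, Rabs (g x) <= M) ->
      is_lim_seq (fun n => expect_scaled n g)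
                 (Finite (RInt (fun y => g y * fY y) 0 1)))
  /\
  (* convergence of all moments, and value of the moments of Y *)
  (forall r : nat,
      is_lim_seq (fun n => expect_scaled n (fun y => y ^ r))
                 (Finite (RInt (fun y => y ^ r * fY y) 0 1))
      /\ RInt (fun y => y ^ r * fY y) 0 1 = 2 / ((INR r + 1) * (INR r + 2))).
Proof.
  split.
  - intros g Hc [M HM]. apply (expect_scaled_lim g M); auto.
  - intros r. split.
    + apply (expect_scaled_lim _ 1).
      * intros x _. apply (@ex_derive_continuous R_AbsRing R_NormedModule). auto_derive. exact I.
      * intros x Hx. rewrite Rabs_pos_eq by (apply pow_le; lra).
        rewrite <- (pow1 r). apply pow_incr. lra.
    + rewrite RInt_mult_fY. apply RInt_pow_beta.
Qed.
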